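(* Let $n\ge 2$ and $\alpha\in\mathbb{Z}_2^n$. Then $$\max_{\beta,\gamma\in\mathbb{Z}_2^n}\mathrm{adp}^{\mathrm{XR}}_1(\alpha,\beta\to\gamma)=\mathrm{adp}^{\mathrm{XR}}_1(\alpha,\alpha\to 0).$$
   Context: For $x\in\mathbb{Z}_2^n$ write $x=(x_0,\dots,x_{n-1})$ and identify $x$ with the integer $\sum_{i=0}^{n-1}x_i2^{n-1-i}$, so $x_0$ is the most significant bit; $x+y$, $x-y$ and $-x$ are computed modulo $2^n$. $\oplus$ is bitwise XOR and $x\lll r=(x_r,\dots,x_{n-1},x_0,\dots,x_{r-1})$. For $f:(\mathbb{Z}_2^n)^k\to\mathbb{Z}_2^n$ the additive differential probability is $\mathrm{adp}^f(\alpha_1,\dots,\alpha_k\to\alpha_{k+1})=2^{-kn}\#\{(x_1,\dots,x_k)\in(\mathbb{Z}_2^n)^k: f(x_1+\alpha_1,\dots,x_k+\alpha_k)=f(x_1,\dots,x_k)+\alpha_{k+1}\}$. For $1\le r\le n-1$, $\mathrm{adp}^{\mathrm{XR}}_r$ denotes $\mathrm{adp}^f$ for $f(x,y)=(x\oplus y)\lll r$. *)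

From mathcomp Require Import all_boot all_order all_algebra.
Set Implicit Arguments. Unset Strict Implicit. Unset Printing Implicit Defensive.
Import Order.TTheory GRing.Theory Num.Theory.

(* n-bit words: elements of Z_2^n identified with integers 0 <= x < 2^n,
   x = sum_i x_i 2^(n-1-i), so x_0 is the most significant bit. *)
Definition word (n : nat) := 'I_(2 ^ n).

Definition bit (n : nat) (x : nat) (i : nat) : bool := odd (x %/ 2 ^ (n.-1 - i)).

Definition of_bits (n : nat) (b : nat -> bool) : nat :=
  \sum_(i < n) (b i : nat) * 2 ^ (n.-1 - i).

(* of_bits n b < 2^n always; the reduction mod 2^n only serves to build the ordinal *)
Definition mkword (n : nat) (b : nat -> bool) : word n :=
  Ordinal (ltn_pmod (of_bits n b) (expn_gt0 2 n)).

Definition wadd n (x y : word n) : word n :=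
  Ordinal (ltn_pmod (x + y) (expn_gt0 2 n)).
Definition wxor n (x y : word n) : word n :=
  mkword n (fun i => bit n x i (+) bit n y i).

Definition wrotl n (x : word n) (r : nat) : word n :=
  mkword n (fun i => bit n x ((i + r) %% n)).

Definition XR n (r : nat) (x y : word n) : word n := wrotl (wxor x y) r.

Definition adpXR n (r : nat) (a b c : word n) : rat :=
  (#|[set xy : word n * word n |
       XR r (wadd xy.1 a) (wadd xy.2 b) == wadd (XR r xy.1 xy.2) c]|%:R)
  / (2 ^ (2 * n))%:R.

Definition wzero n : word n := Ordinal (expn_gt0 2 n).

From mathcomp Require Import all_boot all_order all_algebra.
From mathcomp Require Import zify.
From Stdlib Require PeanoNat.
Import Order.TTheory GRing.Theory Num.Theory.
Set Implicit Arguments. Unset Strict Implicit. Unset Printing Implicit Defensive.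

(* Write n = m + 1.  Rotating by one moves the top bit of (x + alpha) xor (y + beta) to
   the bottom, so XR_1(x + alpha, y + beta) = XR_1(x, y) + gamma splits into an equation
   (x + a) xor (y + b) = (x xor y) + g on the m low-order bits and a condition on the
   parity of the two carries leaving them.  Counting the low-order solutions from the
   least significant bit gives a recursion over incoming carries; a count vanishes unless
   the carries have the parity of the bits of a, b, g, and this pairs off the terms so
   that, by induction, every count is bounded by the one for b = a, g = 0 and equal
   carries.  Summing over the top bits of x and y gives the claim. *)

(* Bits are indexed from the least significant end, unlike [bit]. *)
Definition nbit (x k : nat) : bool := odd (x %/ 2 ^ k).

Lemma bitD_half x : x = odd x + 2 * x./2.
Proof. by rewrite mul2n -{1}(odd_double_half x). Qed.

Lemma half_bitD (e : bool) X : (e + 2 * X)./2 = X.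
Proof. by case: e; rewrite /= ?add0n ?add1n mul2n ?doubleK // uphalf_double. Qed.

Lemma nbitS x k : nbit x k.+1 = nbit x./2 k.
Proof. by rewrite /nbit expnS divnMA divn2. Qed.

Lemma nbit_bitD0 (e : bool) X : nbit (e + 2 * X) 0 = e.
Proof. by rewrite /nbit expn0 divn1 oddD oddM /= addbF oddb. Qed.

Lemma nbit_bitDS (e : bool) X k : nbit (e + 2 * X) k.+1 = nbit X k.
Proof. by rewrite nbitS half_bitD. Qed.

Lemma nbit_small x k : x < 2 ^ k -> nbit x k = false.
Proof. by move=> lt_x; rewrite /nbit divn_small. Qed.

Lemma Nat_oddE x : Nat.odd x = odd x.
Proof.
suff: Nat.odd x = odd x /\ Nat.even x = ~~ odd x by case.
elim: x => [|x [IHo IHe]] //.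
by rewrite PeanoNat.Nat.odd_succ PeanoNat.Nat.even_succ IHo IHe /= negbK.
Qed.

Lemma Nat_div2E x : Nat.div2 x = x./2.
Proof.
have := PeanoNat.Nat.div2_odd x; rewrite Nat_oddE {1}[x]bitD_half.
by case: (odd x) => /=; lia.
Qed.

Lemma testbitE x k : Nat.testbit x k = nbit x k.
Proof.
elim: k x => [|k IHk] x /=; first by rewrite Nat_oddE /nbit expn0 divn1.
by rewrite IHk Nat_div2E nbitS.
Qed.

Lemma nbit_inj x y : (forall k, nbit x k = nbit y k) -> x = y.
Proof. by move=> eq_xy; apply: PeanoNat.Nat.bits_inj => k; rewrite !testbitE. Qed.

Lemma nbit_topD m (e : bool) X k : X < 2 ^ m ->
  nbit (e * 2 ^ m + X) k = if k < m then nbit X k else (k == m) && e.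
Proof.
elim: m e X k => [|m IHm] e X k lt_X.
  move: lt_X; rewrite expn0 ltnS leqn0 => /eqP ->.
  rewrite addn0 muln1; case: k => [|k]; first by rewrite /nbit expn0 divn1 oddb.
  by rewrite nbit_small // (leq_ltn_trans (leq_b1 e)) // (ltn_exp2l 0).
rewrite {1}[X]bitD_half expnS mulnCA addnCA -mulnDr.
case: k => [|k]; first by rewrite nbit_bitD0 /nbit expn0 divn1.
rewrite nbit_bitDS IHm ?ltnS ?eqSS ?nbitS //.
by move: lt_X; rewrite {1}[X]bitD_half expnS; lia.
Qed.

Lemma nbit_lxor x y k : nbit (Nat.lxor x y) k = nbit x k (+) nbit y k.
Proof.
by rewrite -!testbitE PeanoNat.Nat.lxor_spec; case: Nat.testbit; case: Nat.testbit.
Qed.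

Lemma lxor_bitD (e f : bool) X Y :
  Nat.lxor (e + 2 * X) (f + 2 * Y) = (e (+) f) + 2 * Nat.lxor X Y.
Proof.
by apply: nbit_inj => -[|k]; rewrite nbit_lxor ?nbit_bitD0 ?nbit_bitDS ?nbit_lxor.
Qed.

Lemma half_ltn m x : x < 2 ^ m.+1 -> x./2 < 2 ^ m.
Proof. by rewrite {1}[x]bitD_half expnS; lia. Qed.

Lemma lxor_ltn m x y : x < 2 ^ m -> y < 2 ^ m -> Nat.lxor x y < 2 ^ m.
Proof.
elim: m x y => [|m IHm] x y; first by rewrite expn0 !ltnS !leqn0 => /eqP-> /eqP->.
move=> lt_x lt_y; rewrite [x]bitD_half [y]bitD_half lxor_bitD.
have := IHm _ _ (half_ltn lt_x) (half_ltn lt_y); rewrite expnS.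
by case: (_ (+) _) => /=; lia.
Qed.

Lemma lxor_topD m (e f : bool) x y : x < 2 ^ m -> y < 2 ^ m ->
  Nat.lxor (e * 2 ^ m + x) (f * 2 ^ m + y) = (e (+) f) * 2 ^ m + Nat.lxor x y.
Proof.
move=> lt_x lt_y; apply: nbit_inj => k.
rewrite nbit_lxor !nbit_topD ?lxor_ltn //.
by case: (k < m); [rewrite nbit_lxor | case: (k == m)].
Qed.

Lemma of_bitsS n b : of_bits n.+1 b = b n + 2 * of_bits n b.
Proof.
rewrite /of_bits big_ord_recr /= subnn expn0 muln1 addnC; congr (_ + _).
rewrite big_distrr /=; apply: eq_bigr => i _.
by rewrite mulnCA -expnS; congr (_ * 2 ^ _); have := ltn_ord i; lia.
Qed.

Lemma nbit_of_bits n b k : nbit (of_bits n b) k = (k < n) && b (n.-1 - k).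
Proof.
elim: n k => [|n IHn] k; first by rewrite /of_bits big_ord0 /nbit div0n.
rewrite of_bitsS; case: k => [|k]; first by rewrite nbit_bitD0 subn0.
by rewrite nbit_bitDS IHn ltnS; case: ltnP => //= lt_k; congr (b _); lia.
Qed.

Lemma of_bits_ltn n b : of_bits n b < 2 ^ n.
Proof.
elim: n => [|n IHn]; first by rewrite /of_bits big_ord0.
by rewrite of_bitsS expnS; move: IHn; case: (b n) => /=; lia.
Qed.

Lemma val_wxor n (x y : word n) : val (wxor x y) = Nat.lxor x y.
Proof.
rewrite /= modn_small ?of_bits_ltn //; apply: nbit_inj => k.
rewrite nbit_of_bits nbit_lxor /bit; case: ltnP => lt_k /=.
  by have -> : n.-1 - (n.-1 - k) = k by lia.
by rewrite !nbit_small // (leq_trans (ltn_ord _)) ?leq_exp2l.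
Qed.

Lemma top_bitD m x : x < 2 ^ m.+1 ->
  x %/ 2 ^ m = (2 ^ m <= x) /\ x = (2 ^ m <= x) * 2 ^ m + x %% 2 ^ m.
Proof.
move=> lt_x; suff top_x : x %/ 2 ^ m = (2 ^ m <= x) by rewrite -top_x -divn_eq.
case: leqP => le_x; last by rewrite divn_small.
apply/eqP; rewrite eqn_leq -ltnS ltn_divLR ?expn_gt0 // divn_gt0 ?expn_gt0 //.
by rewrite le_x -expnS lt_x.
Qed.

Definition rotl1 m x := x %/ 2 ^ m + 2 * (x %% 2 ^ m).

Lemma val_wrotl1 m (x : word m.+1) : val (wrotl x 1) = rotl1 m x.
Proof.
rewrite /= modn_small ?of_bits_ltn //; have [top_x x_eq] := top_bitD (ltn_ord x).
rewrite /rotl1 top_x; apply: nbit_inj => -[|k]; rewrite nbit_of_bits /bit /=.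
  by rewrite nbit_bitD0 subn0 addn1 modnn subn0 top_x oddb.
rewrite nbit_bitDS ltnS; case: (ltnP k m) => le_k /=.
  rewrite modn_small; last by lia.
  have -> : m - (m - k.+1 + 1) = k by lia.
  by rewrite -/(nbit x k) {1}x_eq nbit_topD ?ltn_pmod ?expn_gt0 // le_k.
by rewrite nbit_small // (leq_trans (ltn_pmod _ (expn_gt0 2 m))) ?leq_exp2l.
Qed.

Lemma sum_exp2S_lsb m (F : nat -> nat) :
  \sum_(0 <= x < 2 ^ m.+1) F x = \sum_(e : bool) \sum_(0 <= x < 2 ^ m) F (e + 2 * x).
Proof.
rewrite big_bool expnS /=; elim: (2 ^ m) => [|k IHk]; first by rewrite muln0 !big_geq.
by rewrite mulnS !add2n !big_nat_recr //= IHk add0n add1n; lia.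
Qed.

Lemma sum_exp2S_msb m (F : nat -> nat) :
  \sum_(0 <= x < 2 ^ m.+1) F x = \sum_(e : bool) \sum_(0 <= x < 2 ^ m) F (e * 2 ^ m + x).
Proof.
rewrite big_bool expnS /=; move: (2 ^ m) => k.
rewrite addnC mul2n -addnn (big_cat_nat _ (leq_addr k k)) //=; congr (_ + _).
rewrite -{1}(add0n k) big_addn addnK.
by apply: eq_bigr => x _; rewrite mul1n addnC.
Qed.

Definition maj (a b c : bool) := [|| a && b, a && c | b && c].

Lemma addn3_bitD (e f c : bool) X Y :
  e + 2 * X + (f + 2 * Y) + c = (e (+) f (+) c) + 2 * (X + Y + maj e f c).
Proof. by case: e; case: f; case: c => /=; lia. Qed.

Lemma modn_bitD m (e : bool) X : (e + 2 * X) %% 2 ^ m.+1 = e + 2 * (X %% 2 ^ m).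
Proof.
have lt_r := ltn_pmod X (expn_gt0 2 m).
rewrite {1}(divn_eq X (2 ^ m)).
have -> : e + 2 * (X %/ 2 ^ m * 2 ^ m + X %% 2 ^ m)
          = X %/ 2 ^ m * 2 ^ m.+1 + (e + 2 * (X %% 2 ^ m)) by rewrite expnS; nia.
by rewrite modnMDl modn_small // expnS; move: lt_r; case: e => /=; lia.
Qed.

Lemma leq_exp_bitD m (e : bool) X : (2 ^ m.+1 <= e + 2 * X) = (2 ^ m <= X).
Proof. by rewrite expnS; case: e => /=; lia. Qed.

Lemma eqn_bitD (e f : bool) X Y : (e + 2 * X == f + 2 * Y) = (e == f) && (X == Y).
Proof. by case: e; case: f => /=; lia. Qed.

(* The low-order part of the XR_1 equation: c1, c2, c3 are carries coming in from
   below, and p is the required xor of the carries leaving x + a + c1 and y + b + c2. *)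
Definition xadd_sol m a b g (c1 c2 c3 p : bool) x y : bool :=
  (Nat.lxor ((x + a + c1) %% 2 ^ m) ((y + b + c2) %% 2 ^ m)
     == (Nat.lxor x y + g + c3) %% 2 ^ m)
  && ((2 ^ m <= x + a + c1) (+) (2 ^ m <= y + b + c2) == p).

Definition xadd_count m a b g c1 c2 c3 p :=
  \sum_(0 <= x < 2 ^ m) \sum_(0 <= y < 2 ^ m) xadd_sol m a b g c1 c2 c3 p x y.

Lemma xadd_count0 a b g c1 c2 c3 p :
  xadd_count 0 a b g c1 c2 c3 p = ((0 < a + c1) (+) (0 < b + c2) == p).
Proof. by rewrite /xadd_count !big_nat1 /xadd_sol expn0 !modn1. Qed.

Lemma xadd_solS m (a0 b0 g0 : bool) a b g c1 c2 c3 p (x0 y0 : bool) x y :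
  xadd_sol m.+1 (a0 + 2 * a) (b0 + 2 * b) (g0 + 2 * g) c1 c2 c3 p
    (x0 + 2 * x) (y0 + 2 * y)
  = (c1 (+) c2 (+) c3 == a0 (+) b0 (+) g0)
    && xadd_sol m a b g (maj x0 a0 c1) (maj y0 b0 c2) (maj (x0 (+) y0) g0 c3) p x y.
Proof.
rewrite /xadd_sol !addn3_bitD lxor_bitD addn3_bitD !modn_bitD lxor_bitD eqn_bitD.
rewrite !leq_exp_bitD andbA; congr (_ && _ && _).
by case: x0; case: y0; case: a0; case: b0; case: g0; case: c1; case: c2; case: c3.
Qed.

Lemma xadd_countS m a b g c1 c2 c3 p :
  xadd_count m.+1 a b g c1 c2 c3 p
  = (c1 (+) c2 (+) c3 == odd a (+) odd b (+) odd g) *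
    \sum_(x0 : bool) \sum_(y0 : bool)
      xadd_count m a./2 b./2 g./2
        (maj x0 (odd a) c1) (maj y0 (odd b) c2) (maj (x0 (+) y0) (odd g) c3) p.
Proof.
rewrite {1}[a]bitD_half {1}[b]bitD_half {1}[g]bitD_half /xadd_count.
rewrite sum_exp2S_lsb big_distrr; apply: eq_bigr => x0 _.
under eq_bigr do rewrite sum_exp2S_lsb.
rewrite exchange_big big_distrr; apply: eq_bigr => y0 _ /=.
rewrite big_distrr; apply: eq_bigr => x _; rewrite big_distrr; apply: eq_bigr => y _.
by rewrite xadd_solS /= mulnb.
Qed.

Lemma xadd_count_parity m a b g c1 c2 c3 p :
  c1 (+) c2 (+) c3 != odd a (+) odd b (+) odd g -> xadd_count m.+1 a b g c1 c2 c3 p = 0.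
Proof. by move=> /negbTE par_neq; rewrite xadd_countS par_neq. Qed.

Lemma xadd_count_diag m a c1 c2 :
  xadd_count m.+1 a a 0 c1 c2 false false
  = (c1 == c2) * xadd_count m.+1 a a 0 c1 c1 false false.
Proof.
case: eqP => [<-|/eqP neq_c]; first by rewrite mul1n.
by rewrite mul0n xadd_count_parity // addbb addbF; case: c1 c2 neq_c => -[].
Qed.

(* If a0 = c1 the carry out of x + a is a0 whatever x0 is.  Otherwise it is x0, and
   the outer parity test forces exactly one of b0 != c2, g0 != c3, so the inner parity
   test changes with y0: for each x0 at most one y0 contributes. *)
Lemma carry_pattern_le (a0 b0 g0 c1 c2 c3 t : bool) (T : bool -> nat) :
  (c1 (+) c2 (+) c3 == a0 (+) b0 (+) g0) *
  \sum_(x0 : bool) \sum_(y0 : bool)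
     (maj x0 a0 c1 (+) maj y0 b0 c2 (+) maj (x0 (+) y0) g0 c3 == t) * T (maj x0 a0 c1)
  <= \sum_(x0 : bool) \sum_(y0 : bool) (maj x0 a0 c1 == maj y0 a0 c1) * T (maj x0 a0 c1).
Proof.
rewrite !big_bool.
by case: a0; case: b0; case: g0; case: c1; case: c2; case: c3; case: t => /=; lia.
Qed.

Lemma xadd_count_le_diag m a b g c1 c2 c3 p : a < 2 ^ m.+1 ->
  xadd_count m.+1 a b g c1 c2 c3 p <= xadd_count m.+1 a a 0 c1 c1 false false.
Proof.
(* The step bounds counts one level down by [xadd_count_parity], which needs at least
   one bit; hence the one-bit base case, checked exhaustively. *)
elim: m a b g c1 c2 c3 p => [|m IHm] a b g c1 c2 c3 p lt_a;
  rewrite xadd_countS [X in _ <= X]xadd_countS /= !addbb eqxx mul1n.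
  have -> : a./2 = 0 by move: (half_ltn lt_a); rewrite expn0; lia.
  rewrite !big_bool !xadd_count0; case: b./2 => [|b'] /=;
  by case: (odd a); case: (odd b); case: (odd g); case: c1; case: c2; case: c3; case: p.
have lt_a' := half_ltn lt_a.
have maj_xFF x : maj x false false = false by case: x.
under [X in _ <= X]eq_bigr do under eq_bigr do rewrite maj_xFF xadd_count_diag.
apply: leq_trans _ (carry_pattern_le (odd a) (odd b) (odd g) c1 c2 c3
                     (odd a./2 (+) odd b./2 (+) odd g./2)
                     (fun c => xadd_count m.+1 a./2 a./2 0 c c false false)).
apply: leq_mul => //; apply: leq_sum => x0 _; apply: leq_sum => y0 _.
case: eqP => [_|/eqP par_neq]; first by rewrite mul1n IHm.
by rewrite xadd_count_parity.
Qed.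

Definition xr1_sol m a b g x y : bool :=
  rotl1 m (Nat.lxor ((x + a) %% 2 ^ m.+1) ((y + b) %% 2 ^ m.+1))
  == (rotl1 m (Nat.lxor x y) + g) %% 2 ^ m.+1.

Lemma val_wadd n (x y : word n) : val (wadd x y) = (x + y) %% 2 ^ n.
Proof. by []. Qed.

Lemma card_xr1_sol m (a b g : word m.+1) :
  #|[set xy : word m.+1 * word m.+1 |
       XR 1 (wadd xy.1 a) (wadd xy.2 b) == wadd (XR 1 xy.1 xy.2) g]|
  = \sum_(0 <= x < 2 ^ m.+1) \sum_(0 <= y < 2 ^ m.+1) xr1_sol m a b g x y.
Proof.
rewrite -sum1_card big_mkcond /= big_mkord.
under [RHS]eq_bigr do rewrite big_mkord.
rewrite [RHS]pair_bigA; apply: eq_bigr => -[x y] _.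
rewrite inE -val_eqE !val_wadd /XR !val_wrotl1 !val_wxor !val_wadd.
by rewrite /xr1_sol; case: (_ == _).
Qed.

Lemma modn_topD m t r : r < 2 ^ m -> (t * 2 ^ m + r) %% 2 ^ m.+1 = odd t * 2 ^ m + r.
Proof.
move=> lt_r; have -> : t * 2 ^ m + r = t./2 * 2 ^ m.+1 + (odd t * 2 ^ m + r).
  by rewrite {1}[t]bitD_half expnS; nia.
by rewrite modnMDl modn_small // expnS; case: (odd t) => /=; lia.
Qed.

Lemma addn_topD m (e f : bool) x y : x < 2 ^ m -> y < 2 ^ m ->
  (e * 2 ^ m + x + (f * 2 ^ m + y)) %% 2 ^ m.+1
  = (e (+) f (+) (2 ^ m <= x + y)) * 2 ^ m + (x + y) %% 2 ^ m.
Proof.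
move=> lt_x lt_y; have lt_xy : x + y < 2 ^ m.+1 by rewrite expnS; lia.
have [_ xy_eq] := top_bitD lt_xy.
have -> : e * 2 ^ m + x + (f * 2 ^ m + y)
          = (e + f + (2 ^ m <= x + y)) * 2 ^ m + (x + y) %% 2 ^ m.
  by move: xy_eq; move: (2 ^ m <= x + y) => c; nia.
by rewrite modn_topD ?ltn_pmod ?expn_gt0 // !oddD !oddb.
Qed.

Lemma rotl1_topD m (e : bool) x : x < 2 ^ m -> rotl1 m (e * 2 ^ m + x) = e + 2 * x.
Proof.
move=> lt_x; rewrite /rotl1 divnMDl ?expn_gt0 // divn_small // addn0.
by rewrite modnMDl modn_small.
Qed.

Lemma addn_bitD (e f : bool) X Y :
  e + 2 * X + (f + 2 * Y) = (e (+) f) + 2 * (X + Y + (e && f)).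
Proof. by case: e; case: f => /=; lia. Qed.

Lemma xr1_sol_topD m (ah bh g0 xh yh : bool) al bl g xl yl :
  al < 2 ^ m -> bl < 2 ^ m -> xl < 2 ^ m -> yl < 2 ^ m ->
  xr1_sol m (ah * 2 ^ m + al) (bh * 2 ^ m + bl) (g0 + 2 * g)
    (xh * 2 ^ m + xl) (yh * 2 ^ m + yl)
  = xadd_sol m al bl g false false ((xh (+) yh) && g0) (ah (+) bh (+) g0) xl yl.
Proof.
move=> lt_al lt_bl lt_xl lt_yl; have ltm_mod := ltn_pmod _ (expn_gt0 2 m).
rewrite /xr1_sol !addn_topD // lxor_topD // rotl1_topD ?lxor_ltn //.
rewrite lxor_topD // rotl1_topD ?lxor_ltn // addn_bitD modn_bitD eqn_bitD.
rewrite /xadd_sol !addn0 andbC; congr (_ && _).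
move: (2 ^ m <= _) (2 ^ m <= _) => cx cy.
by case: xh; case: yh; case: ah; case: bh; case: g0; case: cx; case: cy.
Qed.

Lemma card_xr1_sol_split m (a b g : word m.+1) :
  #|[set xy : word m.+1 * word m.+1 |
       XR 1 (wadd xy.1 a) (wadd xy.2 b) == wadd (XR 1 xy.1 xy.2) g]|
  = \sum_(xh : bool) \sum_(yh : bool)
      xadd_count m (a %% 2 ^ m) (b %% 2 ^ m) g./2 false false
        ((xh (+) yh) && odd g) ((2 ^ m <= a) (+) (2 ^ m <= b) (+) odd g).
Proof.
rewrite card_xr1_sol; have [_ a_eq] := top_bitD (ltn_ord a).
have [_ b_eq] := top_bitD (ltn_ord b); have ltm_mod := ltn_pmod _ (expn_gt0 2 m).
rewrite sum_exp2S_msb; apply: eq_bigr => xh _.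
under eq_bigr do rewrite sum_exp2S_msb.
rewrite exchange_big; apply: eq_bigr => yh _.
apply: eq_big_nat => x /andP[_ lt_x]; apply: eq_big_nat => y /andP[_ lt_y].
rewrite [in xr1_sol _ a]a_eq [in xr1_sol _ _ b]b_eq [g in xr1_sol _ _ _ g]bitD_half.
by rewrite xr1_sol_topD.
Qed.

Lemma card_XR1_le m (a b g : word m.+2) :
  #|[set xy : word m.+2 * word m.+2 |
       XR 1 (wadd xy.1 a) (wadd xy.2 b) == wadd (XR 1 xy.1 xy.2) g]|
  <= #|[set xy : word m.+2 * word m.+2 |
       XR 1 (wadd xy.1 a) (wadd xy.2 a) == wadd (XR 1 xy.1 xy.2) (wzero m.+2)]|.
Proof.
rewrite !card_xr1_sol_split /= addbb; apply: leq_sum => xh _; apply: leq_sum => yh _.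
by rewrite andbF xadd_count_le_diag // ltn_pmod ?expn_gt0.
Qed.

Local Open Scope ring_scope.

Lemma bigmax_attained (R : realDomainType) (I : finType) (F : I -> R) i0 :
  0 <= F i0 -> (forall i, F i <= F i0) -> \big[Num.max/0]_i F i = F i0.
Proof.
move=> F_ge0 F_le; apply/eqP; rewrite eq_le; apply/andP; split.
  by apply: (big_ind (fun x => x <= F i0)) => // x y; rewrite ge_max => -> ->.
by rewrite (bigD1 i0) //= le_max lexx.
Qed.

Unset Implicit Arguments.

Theorem theorem6 (n : nat) (Hn : (2 <= n)%N) (alpha : word n) :
  \big[Num.max/0]_(bc : word n * word n) adpXR 1 alpha bc.1 bc.2
  = adpXR 1 alpha alpha (wzero n).
Proof.
case: n Hn alpha => [|[|m]] // _ alpha.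
apply: (bigmax_attained (i0 := (alpha, wzero m.+2))) => [|[b c]] /=; rewrite /adpXR.
  by rewrite divr_ge0.
by rewrite ler_pM2r ?invr_gt0 ?ltr0n ?expn_gt0 // ler_nat card_XR1_le.
Qed.
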